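(* Let $X$ be a Banach space of analytic functions on $\mathbb{U}$ such that $X\hookrightarrow H_1$, and let $E$ be an order-continuous Banach sequence lattice. If $\lambda\in E$, then the multiplier operator $M_\lambda\colon X\to E$, $M_\lambda f=\{\lambda_n\hat f(n)\}$, is (well defined, bounded and) compact.
   Context: $\mathbb{U}$ is the open unit disk, $H_1$ the Hardy space on $\mathbb{U}$, $f=\sum_{n\ge0}\hat f(n)z^n$ the Taylor expansion; ''$\hookrightarrow$'' denotes continuous inclusion. A Banach sequence lattice on $\mathbb{Z}_+$ is a Banach space $E$ of sequences with $|y_n|\le|x_n|$ for all $n$, $x\in E$ implying $y\in E$ and $\|y\|_E\le\|x\|_E$. It is order-continuous if every nonnegative nonincreasing sequence in $E$ converging to $0$ pointwise converges to $0$ in norm. $\{e_n\}$ denotes the standard unit vectors. *)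

From Stdlib Require Import Reals.
From Coquelicot Require Import Coquelicot.
Open Scope R_scope.

Definition seqC := nat -> C.

Definition sadd (a b : seqC) : seqC := fun n => Cplus (a n) (b n).
Definition sscal (c : C) (a : seqC) : seqC := fun n => Cmult c (a n).
Definition ssub (a b : seqC) : seqC := fun n => Cminus (a n) (b n).
Definition szero : seqC := fun _ => RtoC 0.

(** Sum of a complex series, computed componentwise (meaningful when the
    series converges). *)
Definition Csum (u : nat -> C) : C :=
  (Series (fun n => Re (u n)), Series (fun n => Im (u n))).

(** A function analytic on the open unit disk U is identified with its
    Taylor coefficient sequence [a] (so [a n] is \hat f(n)); the requirement
    is that the Taylor series converges at every point of U. *)
Definition analytic_on_U (a : seqC) : Prop :=
  forall z : C, Cmod z < 1 -> @ex_pseries C_AbsRing C_NormedModule a z.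

Definition fval (a : seqC) (z : C) : C :=
  Csum (fun n => Cmult (a n) (Cpow z n)).

Definition M1 (a : seqC) (r : R) : R :=
  / (2 * PI) * RInt (fun t => Cmod (fval a (r * cos t, r * sin t))) 0 (2 * PI).

Definition H1_norm_le (a : seqC) (M : R) : Prop :=
  forall r, 0 <= r < 1 -> M1 a r <= M.

Definition is_subspace (S : seqC -> Prop) : Prop :=
  S szero /\
  (forall a b, S a -> S b -> S (sadd a b)) /\
  (forall c a, S a -> S (sscal c a)).

Definition is_norm_on (S : seqC -> Prop) (N : seqC -> R) : Prop :=
  (forall a, S a -> 0 <= N a) /\
  (forall a, S a -> N a = 0 -> forall n, a n = RtoC 0) /\
  (forall c a, S a -> N (sscal c a) = Cmod c * N a) /\
  (forall a b, S a -> S b -> N (sadd a b) <= N a + N b).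

Definition is_complete (S : seqC -> Prop) (N : seqC -> R) : Prop :=
  forall u : nat -> seqC, (forall k, S (u k)) ->
    (forall eps, 0 < eps -> exists K, forall k l, (K <= k)%nat -> (K <= l)%nat ->
        N (ssub (u k) (u l)) < eps) ->
    exists g, S g /\ is_lim_seq (fun k => N (ssub (u k) g)) 0.

Definition is_Banach (S : seqC -> Prop) (N : seqC -> R) : Prop :=
  is_subspace S /\ is_norm_on S N /\ is_complete S N.

Definition Banach_space_of_analytic_functions (X : seqC -> Prop) (N : seqC -> R) : Prop :=
  is_Banach X N /\ (forall f, X f -> analytic_on_U f).

Definition embeds_in_H1 (X : seqC -> Prop) (N : seqC -> R) : Prop :=
  exists C0 : R, forall f, X f -> H1_norm_le f (C0 * N f).

Definition Banach_sequence_lattice (E : seqC -> Prop) (N : seqC -> R) : Prop :=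
  is_Banach E N /\
  (forall x y, E x -> (forall n, Cmod (y n) <= Cmod (x n)) -> E y /\ N y <= N x).

Definition order_continuous (E : seqC -> Prop) (N : seqC -> R) : Prop :=
  forall x : nat -> seqC,
    (forall k, E (x k)) ->
    (forall k n, Im (x k n) = 0 /\ 0 <= Re (x k n)) ->
    (forall k n, Re (x (S k) n) <= Re (x k n)) ->
    (forall n, is_lim_seq (fun k => Re (x k n)) 0) ->
    is_lim_seq (fun k => N (x k)) 0.

Definition mult_op (lam : seqC) (f : seqC) : seqC := fun n => Cmult (lam n) (f n).

Definition compact_op (X : seqC -> Prop) (NX : seqC -> R)
    (E : seqC -> Prop) (NE : seqC -> R) (T : seqC -> seqC) : Prop :=
  forall u : nat -> seqC, (forall k, X (u k)) ->
    (exists B, forall k, NX (u k) <= B) ->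
    exists (phi : nat -> nat) (g : seqC),
      (forall k, (phi k < phi (S k))%nat) /\ E g /\
      is_lim_seq (fun k => NE (ssub (T (u (phi k))) g)) 0.

(* Write a_n for the Taylor coefficients of f.  For 0 <= r < 1 the Taylor series converges
   uniformly on the circle |z| = r, so integrating Re (conj a_n e^{-int} f(r e^{it})) termwise
   gives 2 pi r^n |a_n|^2, while the integrand is at most |a_n| |f(r e^{it})|.  Hence
   |a_n| r^n <= M_1(f, r), and letting r -> 1, |a_n| <= ||f||_{H_1} <= C ||f||_X.  Thus
   |M_lam f| <= C ||f||_X |lam| pointwise, which gives boundedness in the lattice E.  For
   compactness, a bounded sequence (f_k) in X has uniformly bounded coefficients, so a diagonal
   argument yields a subsequence converging coordinatewise to some g.  Then lam (f_k - g) is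
   small in E: on the head n <= m it is a finite combination of coordinates tending to 0, and on
   the tail n > m it is dominated by the tail of |lam|, whose norm is small for large m by order
   continuity. *)

From Stdlib Require Import Reals Lra Lia ClassicalEpsilon.
From Coquelicot Require Import Coquelicot.
Open Scope R_scope.

Lemma im_le_Cmod (c : C) : Rabs (Im c) <= Cmod c.
Proof.
  unfold Cmod. rewrite <- sqrt_Rsqr_abs. apply sqrt_le_1_alt. unfold Rsqr, Im.
  pose proof (pow2_ge_0 (fst c)). simpl. nra.
Qed.

Lemma Cmod_le_Re_Im (c : C) : Cmod c <= Rabs (Re c) + Rabs (Im c).
Proof.
  unfold Cmod. rewrite <- (sqrt_pow2 (Rabs (Re c) + Rabs (Im c))).
  2:{ pose proof (Rabs_pos (Re c)); pose proof (Rabs_pos (Im c)); lra. }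
  apply sqrt_le_1_alt. rewrite <- (pow2_abs (fst c)), <- (pow2_abs (snd c)). unfold Re, Im.
  pose proof (Rabs_pos (fst c)); pose proof (Rabs_pos (snd c)). nra.
Qed.

Lemma Cmod_sub_Cmod_le (x y : C) : Rabs (Cmod x - Cmod y) <= Cmod (x - y).
Proof.
  assert (Hx : Cmod x <= Cmod (x - y) + Cmod y).
  { replace x with ((x - y) + y)%C at 1 by ring. apply Cmod_triangle. }
  assert (Hy : Cmod y <= Cmod (x - y) + Cmod x).
  { replace y with (- (x - y) + x)%C at 1 by ring.
    rewrite <- (Cmod_opp (x - y)). apply Cmod_triangle. }
  apply Rabs_le. lra.
Qed.

Lemma Cmod_sub_le (x y : C) : Cmod (x - y) <= Cmod x + Cmod y.
Proof. unfold Cminus. rewrite <- (Cmod_opp y). apply Cmod_triangle. Qed.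

Lemma Cmod_polar (rho t : R) : 0 <= rho -> Cmod (rho * cos t, rho * sin t) = rho.
Proof.
  intros Hrho. unfold Cmod. simpl fst; simpl snd.
  replace ((rho * cos t) ^ 2 + (rho * sin t) ^ 2) with (rho ^ 2 * ((sin t)² + (cos t)²))
    by (unfold Rsqr; ring).
  now rewrite sin2_cos2, Rmult_1_r, sqrt_pow2.
Qed.

Definition cis (t : R) : C := (cos t, sin t).

Lemma Cmod_cis (t : R) : Cmod (cis t) = 1.
Proof.
  unfold cis. rewrite <- (Rmult_1_l (cos t)), <- (Rmult_1_l (sin t)). apply Cmod_polar. lra.
Qed.

Lemma Cpow_polar (r t : R) (k : nat) :
  Cpow (r * cos t, r * sin t) k = (r ^ k * cos (INR k * t), r ^ k * sin (INR k * t)).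
Proof.
  induction k as [|k IH].
  - simpl. rewrite Rmult_0_l, cos_0, sin_0. unfold RtoC. f_equal; ring.
  - simpl Cpow. rewrite IH, S_INR.
    replace ((INR k + 1) * t) with (INR k * t + t) by ring.
    rewrite cos_plus, sin_plus. unfold Cmult. simpl. f_equal; ring.
Qed.

(** * Uniform limits of series and integrals *)

Lemma filterlim_unif_of_bound (f : nat -> R -> R) (g : R -> R) (e : nat -> R) :
  is_lim_seq e 0 -> (forall N t, Rabs (f N t - g t) <= e N) ->
  filterlim f eventually (@locally (fct_UniformSpace R R_UniformSpace) g).
Proof.
  intros He Hfg P [eps HP].
  apply is_lim_seq_spec in He. destruct (He eps) as [N0 HN0].
  exists N0. intros N HN. apply HP. intros t.
  specialize (HN0 N HN). rewrite Rminus_0_r in HN0.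
  change (Rabs (f N t - g t) < eps).
  eapply Rle_lt_trans; [apply Hfg|]. eapply Rle_lt_trans; [apply Rle_abs|exact HN0].
Qed.

Lemma is_RInt_unif_limit (f : nat -> R -> R) (g : R -> R) (I : nat -> R) (a b l : R) :
  (forall N, is_RInt (f N) a b (I N)) ->
  filterlim f eventually (@locally (fct_UniformSpace R R_UniformSpace) g) ->
  is_lim_seq I l -> is_RInt g a b l.
Proof.
  intros HI Hfg Hl.
  destruct (filterlim_RInt (V:=R_CompleteNormedModule) f a b eventually _ g I HI Hfg)
    as [If [HIf Hg]].
  replace l with If; [exact Hg|].
  apply (filterlim_locally_unique (F:=eventually) I); [exact HIf|exact Hl].
Qed.

Lemma ex_RInt_unif_limit (f : nat -> R -> R) (g : R -> R) (a b : R) :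
  (forall N, ex_RInt (f N) a b) ->
  filterlim f eventually (@locally (fct_UniformSpace R R_UniformSpace) g) ->
  ex_RInt g a b.
Proof.
  intros Hf Hfg.
  destruct (filterlim_RInt (V:=R_CompleteNormedModule) f a b eventually _ g
    (fun N => RInt (f N) a b) (fun N => RInt_correct _ _ _ (Hf N)) Hfg) as [If [_ Hg]].
  now exists If.
Qed.

Lemma ex_series_geom_bound (x : nat -> R) (K q : R) :
  0 <= q < 1 -> (forall k, Rabs (x k) <= K * q ^ k) -> ex_series x.
Proof.
  intros Hq Hx.
  apply (ex_series_le (K:=R_AbsRing) (V:=R_CompleteNormedModule) x (fun k => K * q ^ k) Hx).
  apply (ex_series_scal_l (K:=R_AbsRing) (V:=R_NormedModule) K (fun k => q ^ k)).
  apply ex_series_geom. rewrite Rabs_pos_eq; lra.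
Qed.

Lemma Series_sub_sum_le (x : nat -> R) (K q : R) (N : nat) :
  0 <= q < 1 -> (forall k, Rabs (x k) <= K * q ^ k) ->
  Rabs (Series x - sum_f_R0 x N) <= K / (1 - q) * q ^ S N.
Proof.
  intros Hq Hx.
  assert (Htail : forall k, Rabs (x (S N + k)%nat) <= K * q ^ S N * q ^ k).
  { intros k. rewrite Rmult_assoc, <- pow_add. apply Hx. }
  rewrite (Series_incr_n x (S N)) by (lia || exact (ex_series_geom_bound x K q Hq Hx)).
  simpl pred.
  replace (sum_f_R0 x N + Series (fun k => x (S N + k)%nat) - sum_f_R0 x N)
    with (Series (fun k => x (S N + k)%nat)) by ring.
  eapply Rle_trans.
  { apply Series_Rabs, (ex_series_geom_bound _ (K * q ^ S N) q Hq).
    intros k. rewrite Rabs_Rabsolu. apply Htail. }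
  eapply Rle_trans.
  { apply (Series_le _ (fun k => K * q ^ S N * q ^ k)).
    - intros k. split; [apply Rabs_pos|apply Htail].
    - apply (ex_series_scal_l (K:=R_AbsRing) (V:=R_NormedModule) _ (fun k => q ^ k)).
      apply ex_series_geom. rewrite Rabs_pos_eq; lra. }
  rewrite Series_scal_l, Series_geom by (rewrite Rabs_pos_eq; lra). unfold Rdiv. lra.
Qed.

Lemma is_lim_seq_geom_tail (K q : R) :
  0 <= q < 1 -> is_lim_seq (fun N => K / (1 - q) * q ^ S N) 0.
Proof.
  intros Hq. replace (Finite 0) with (Rbar_mult (K / (1 - q)) 0) by (simpl; f_equal; ring).
  apply is_lim_seq_scal_l, (is_lim_seq_incr_1 (fun N => q ^ N)), is_lim_seq_geom.
  rewrite Rabs_pos_eq; lra.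
Qed.

Lemma filterlim_sum_Series_unif (x : nat -> R -> R) (K q : R) :
  0 <= q < 1 -> (forall k t, Rabs (x k t) <= K * q ^ k) ->
  filterlim (fun N t => sum_f_R0 (fun k => x k t) N) eventually
    (@locally (fct_UniformSpace R R_UniformSpace) (fun t => Series (fun k => x k t))).
Proof.
  intros Hq Hx. apply (filterlim_unif_of_bound _ _ (fun N => K / (1 - q) * q ^ S N)).
  - now apply is_lim_seq_geom_tail.
  - intros N t. rewrite <- Rabs_Ropp, Ropp_minus_distr. now apply Series_sub_sum_le.
Qed.

Lemma Re_mul_Csum (c : C) (u : nat -> C) :
  ex_series (fun k => Re (u k)) -> ex_series (fun k => Im (u k)) ->
  Re (c * Csum u) = Series (fun k => Re (c * u k)).
Proof.
  intros HRe HIm. unfold Csum. simpl.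
  rewrite <- !Series_scal_l, <- Series_minus.
  - apply Series_ext. intros k. reflexivity.
  - now apply (ex_series_scal_l (K:=R_AbsRing) (V:=R_NormedModule) (fst c) (fun k => Re (u k))).
  - now apply (ex_series_scal_l (K:=R_AbsRing) (V:=R_NormedModule) (snd c) (fun k => Im (u k))).
Qed.

Lemma is_RInt_sum_f_R0 (f : nat -> R -> R) (I : nat -> R) (a b : R) (N : nat) :
  (forall k, is_RInt (f k) a b (I k)) ->
  is_RInt (fun t => sum_f_R0 (fun k => f k t) N) a b (sum_f_R0 I N).
Proof.
  intros Hf. induction N as [|N IH]; simpl; [apply Hf|].
  exact (is_RInt_plus (V:=R_NormedModule) _ _ a b _ _ IH (Hf (S N))).
Qed.

Lemma continuous_sum_f_R0 (f : nat -> R -> R) (N : nat) (t : R) :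
  (forall k, continuous (f k) t) -> continuous (fun t => sum_f_R0 (fun k => f k t) N) t.
Proof.
  intros Hf. induction N as [|N IH]; simpl; [apply Hf|].
  exact (continuous_plus (K:=R_AbsRing) (V:=R_NormedModule) _ _ t IH (Hf (S N))).
Qed.

Lemma sum_f_R0_indicator (c : R) (n N : nat) :
  sum_f_R0 (fun k => if Nat.eq_dec k n then c else 0) N = if Compare_dec.le_dec n N then c else 0.
Proof.
  induction N as [|N IH]; cbn [sum_f_R0].
  - destruct (Nat.eq_dec 0 n), (Compare_dec.le_dec n 0); lia || reflexivity.
  - rewrite IH.
    destruct (Nat.eq_dec (S N) n), (Compare_dec.le_dec n N), (Compare_dec.le_dec n (S N));
      lia || ring.
Qed.

Lemma is_RInt_lin_comb (f g : R -> R) (a b If Ig c d e : R) :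
  is_RInt f a b If -> is_RInt g a b Ig ->
  is_RInt (fun t => e * (c * f t - d * g t)) a b (e * (c * If - d * Ig)).
Proof.
  intros Hf Hg.
  exact (is_RInt_scal (V:=R_NormedModule) _ a b e _ (is_RInt_minus (V:=R_NormedModule) _ _ a b _ _
    (is_RInt_scal (V:=R_NormedModule) f a b c If Hf)
    (is_RInt_scal (V:=R_NormedModule) g a b d Ig Hg))).
Qed.

Lemma is_RInt_antiderivative (F f : R -> R) (a b v : R) :
  (forall t, is_derive F t (f t)) -> (forall t, ex_derive f t) -> F b - F a = v ->
  is_RInt f a b v.
Proof.
  intros HF Hf <-. apply (is_RInt_derive (V:=R_CompleteNormedModule) F f a b (fun t _ => HF t)).
  intros t _. exact (ex_derive_continuous (K:=R_AbsRing) (V:=R_NormedModule) f t (Hf t)).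
Qed.

Lemma sin_IZR_mul_2PI (m : Z) : sin (IZR m * (2 * PI)) = 0.
Proof. apply sin_eq_0_1. exists (2 * m)%Z. rewrite mult_IZR. ring. Qed.

Lemma cos_IZR_mul_2PI (m : Z) : cos (IZR m * (2 * PI)) = 1.
Proof.
  replace (IZR m * (2 * PI)) with (2 * (IZR m * PI)) by ring.
  rewrite cos_2a_sin, sin_eq_0_1 by (now exists m). ring.
Qed.

Lemma is_RInt_cos_2PI (m : Z) :
  is_RInt (fun t => cos (IZR m * t)) 0 (2 * PI) (if Z.eq_dec m 0 then 2 * PI else 0).
Proof.
  destruct (Z.eq_dec m 0) as [->|Hm].
  - apply (is_RInt_antiderivative (fun t => t)).
    + intros t. auto_derive; [easy|]. now rewrite Rmult_0_l, cos_0.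
    + intros t. auto_derive. easy.
    + ring.
  - apply not_0_IZR in Hm.
    apply (is_RInt_antiderivative (fun t => sin (IZR m * t) / IZR m)).
    + intros t. auto_derive; [easy|]. now field.
    + intros t. auto_derive. easy.
    + rewrite sin_IZR_mul_2PI, Rmult_0_r, sin_0. now field.
Qed.

Lemma is_RInt_sin_2PI (m : Z) : is_RInt (fun t => sin (IZR m * t)) 0 (2 * PI) 0.
Proof.
  destruct (Z.eq_dec m 0) as [->|Hm].
  - apply (is_RInt_antiderivative (fun _ => 0)).
    + intros t. auto_derive; [easy|]. now rewrite Rmult_0_l, sin_0.
    + intros t. auto_derive. easy.
    + ring.
  - apply not_0_IZR in Hm.
    apply (is_RInt_antiderivative (fun t => - cos (IZR m * t) / IZR m)).
    + intros t. auto_derive; [easy|]. now field.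
    + intros t. auto_derive. easy.
    + rewrite cos_IZR_mul_2PI, Rmult_0_r, cos_0. now field.
Qed.

(** * Taylor coefficients and integral means *)

Lemma bounded_of_eventually_bounded (x : nat -> R) (N : nat) (B : R) :
  (forall k, (N <= k)%nat -> x k <= B) -> exists K, forall k, x k <= K.
Proof.
  revert B. induction N as [|N IH]; intros B HB.
  - exists B. intros k. apply HB. lia.
  - apply (IH (Rmax B (x N))). intros k Hk.
    destruct (Nat.eq_dec k N) as [->|Hne]; [apply Rmax_r|].
    eapply Rle_trans; [apply HB; lia|apply Rmax_l].
Qed.

Lemma analytic_coef_geom (a : seqC) (r : R) :
  analytic_on_U a -> 0 <= r < 1 ->
  exists K q, 0 <= q < 1 /\ forall k, Cmod (a k) * r ^ k <= K * q ^ k.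
Proof.
  intros Ha Hr. set (r' := (1 + r) / 2).
  assert (Hr' : Cmod (RtoC r') < 1) by (rewrite Cmod_R, Rabs_pos_eq; unfold r'; lra).
  destruct (Cauchy_ex_series _ (Ha _ Hr') (mkposreal 1 Rlt_0_1)) as [N HN].
  destruct (bounded_of_eventually_bounded (fun k => Cmod (a k) * r' ^ k) N 1) as [K HK].
  { intros k Hk. specialize (HN k k Hk Hk). rewrite sum_n_n in HN.
    change (Cmod (Cmult (Cpow (RtoC r') k) (a k)) < 1) in HN.
    rewrite Cmod_mult, Cmod_pow, Cmod_R, Rabs_pos_eq in HN by (unfold r'; lra). lra. }
  exists K, (r / r'). split.
  - unfold r'. split; [apply Rle_mult_inv_pos; lra|].
    apply Rmult_lt_reg_r with ((1 + r) / 2); [lra|].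
    unfold Rdiv. rewrite Rmult_assoc, Rinv_l; lra.
  - intros k. replace (r ^ k) with (r' ^ k * (r / r') ^ k)
      by (rewrite <- Rpow_mult_distr; f_equal; unfold r'; field; lra).
    rewrite <- Rmult_assoc. apply Rmult_le_compat_r; [apply pow_le|apply HK].
    apply Rle_mult_inv_pos; unfold r'; lra.
Qed.

Section CircleMeans.

Variables (a : seqC) (r : R) (n : nat).
Hypothesis Ha : analytic_on_U a.
Hypothesis Hr : 0 <= r < 1.

Let term (k : nat) (t : R) : C := Cmult (a k) (Cpow (r * cos t, r * sin t) k).

Let fourier (k : nat) (t : R) : R := Re (Cconj (a n) * cis (- (INR n * t)) * term k t).

Lemma Re_term k t :
  Re (term k t) = r ^ k * (Re (a k) * cos (INR k * t) - Im (a k) * sin (INR k * t)).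
Proof. unfold term. rewrite Cpow_polar. unfold Re, Im. simpl. ring. Qed.

Lemma Im_term k t :
  Im (term k t) = r ^ k * (Re (a k) * sin (INR k * t) + Im (a k) * cos (INR k * t)).
Proof. unfold term. rewrite Cpow_polar. unfold Re, Im. simpl. ring. Qed.

Lemma term_geom : exists K q, 0 <= q < 1 /\ forall k t, Cmod (term k t) <= K * q ^ k.
Proof.
  destruct (analytic_coef_geom a r Ha Hr) as [K [q [Hq HK]]].
  exists K, q. split; [exact Hq|]. intros k t.
  unfold term. rewrite Cmod_mult, Cpow_polar, Cmod_polar by (apply pow_le; lra). apply HK.
Qed.

Lemma fourier_eq k t :
  fourier k t = r ^ k * (Re (Cconj (a n) * a k) * cos (IZR (Z.of_nat k - Z.of_nat n) * t)
                         - Im (Cconj (a n) * a k) * sin (IZR (Z.of_nat k - Z.of_nat n) * t)).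
Proof.
  unfold fourier, term, cis. rewrite Cpow_polar, minus_IZR, <- !INR_IZR_INZ.
  replace ((INR k - INR n) * t) with (INR k * t + - (INR n * t)) by ring.
  rewrite cos_plus, sin_plus, cos_neg, sin_neg. unfold Re, Im. simpl. ring.
Qed.

Lemma is_RInt_fourier k :
  is_RInt (fourier k) 0 (2 * PI)
    (if Nat.eq_dec k n then 2 * PI * (r ^ n * Cmod (a n) ^ 2) else 0).
Proof.
  set (m := (Z.of_nat k - Z.of_nat n)%Z).
  assert (Hv : (if Nat.eq_dec k n then 2 * PI * (r ^ n * Cmod (a n) ^ 2) else 0)
               = r ^ k * (Re (Cconj (a n) * a k) * (if Z.eq_dec m 0 then 2 * PI else 0)
                          - Im (Cconj (a n) * a k) * 0)).
  { unfold m. destruct (Nat.eq_dec k n) as [->|Hkn], (Z.eq_dec _ 0); try lia.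
    - rewrite Cmod2_alt. unfold Re, Im. simpl. ring.
    - ring. }
  (* [rewrite Hv] fails: in the goal the [if] is elaborated at type [NormedModule.sort _]. *)
  refine (eq_ind _ (fun v => is_RInt _ 0 (2 * PI) v) _ _ (eq_sym Hv)).
  eapply is_RInt_ext; [intros t _; symmetry; apply fourier_eq|].
  apply is_RInt_lin_comb; [apply is_RInt_cos_2PI|apply is_RInt_sin_2PI].
Qed.

Lemma is_RInt_Re_twisted_fval :
  is_RInt (fun t => Re (Cconj (a n) * cis (- (INR n * t)) * fval a (r * cos t, r * sin t)))
    0 (2 * PI) (2 * PI * (r ^ n * Cmod (a n) ^ 2)).
Proof.
  destruct term_geom as [K [q [Hq HK]]].
  assert (Hfourier : forall k t, Rabs (fourier k t) <= Cmod (a n) * K * q ^ k).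
  { intros k t. eapply Rle_trans; [apply re_le_Cmod|].
    rewrite !Cmod_mult, Cmod_conj, Cmod_cis, Rmult_1_r, Rmult_assoc.
    apply Rmult_le_compat_l; [apply Cmod_ge_0|apply HK]. }
  apply (is_RInt_ext (fun t => Series (fun k => fourier k t))).
  { intros t _. symmetry. apply Re_mul_Csum; apply (ex_series_geom_bound _ K q Hq); intros k;
      eapply Rle_trans; [apply re_le_Cmod|apply HK|apply im_le_Cmod|apply HK]. }
  apply (is_RInt_unif_limit (fun N t => sum_f_R0 (fun k => fourier k t) N) _
    (sum_f_R0 (fun k => if Nat.eq_dec k n then 2 * PI * (r ^ n * Cmod (a n) ^ 2) else 0))).
  - intros N. apply is_RInt_sum_f_R0, is_RInt_fourier.
  - exact (filterlim_sum_Series_unif _ _ q Hq Hfourier).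
  - apply (is_lim_seq_incr_n _ n). eapply is_lim_seq_ext; [|apply is_lim_seq_const].
    intros N. rewrite sum_f_R0_indicator. destruct (Compare_dec.le_dec n (N + n)); [easy|lia].
Qed.

Lemma continuous_Re_Im_term k t :
  continuous (fun t => Re (term k t)) t /\ continuous (fun t => Im (term k t)) t.
Proof.
  split; [eapply continuous_ext; [intros s; symmetry; apply Re_term|]
         |eapply continuous_ext; [intros s; symmetry; apply Im_term|]];
  apply (ex_derive_continuous (K:=R_AbsRing) (V:=R_NormedModule)); auto_derive; easy.
Qed.

Lemma ex_RInt_Cmod_fval : ex_RInt (fun t => Cmod (fval a (r * cos t, r * sin t))) 0 (2 * PI).
Proof.
  destruct term_geom as [K [q [Hq HK]]].
  set (U N t := sum_f_R0 (fun k => Re (term k t)) N).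
  set (V N t := sum_f_R0 (fun k => Im (term k t)) N).
  apply (ex_RInt_unif_limit (fun N t => Cmod (U N t, V N t))).
  - intros N. apply (ex_RInt_continuous (V:=R_CompleteNormedModule)). intros t _.
    assert (Hsq : forall f : R -> R, continuous f t -> continuous (fun s => f s ^ 2) t).
    { intros f Hf. apply (continuous_comp f (fun x => x ^ 2)); [exact Hf|].
      apply (ex_derive_continuous (K:=R_AbsRing) (V:=R_NormedModule)). auto_derive. easy. }
    apply continuous_sqrt_comp, (continuous_plus (K:=R_AbsRing) (V:=R_NormedModule)); apply Hsq;
      apply continuous_sum_f_R0; intros k; apply continuous_Re_Im_term.
  - apply (filterlim_unif_of_bound _ _ (fun N => 2 * (K / (1 - q) * q ^ S N))).
    + replace (Finite 0) with (Rbar_mult 2 0) by (simpl; f_equal; ring).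
      now apply is_lim_seq_scal_l, is_lim_seq_geom_tail.
    + intros N t. eapply Rle_trans; [apply Cmod_sub_Cmod_le|].
      eapply Rle_trans; [apply Cmod_le_Re_Im|].
      change (Rabs (U N t - Series (fun k => Re (term k t)))
              + Rabs (V N t - Series (fun k => Im (term k t))) <= 2 * (K / (1 - q) * q ^ S N)).
      rewrite !(Rabs_minus_sym _ (Series _)).
      pose proof (Series_sub_sum_le (fun k => Re (term k t)) K q N Hq
        (fun k => Rle_trans _ _ _ (re_le_Cmod _) (HK k t))).
      pose proof (Series_sub_sum_le (fun k => Im (term k t)) K q N Hq
        (fun k => Rle_trans _ _ _ (im_le_Cmod _) (HK k t))).
      unfold U, V. lra.
Qed.

Lemma Cmod_coef_pow_le_M1 : Cmod (a n) * r ^ n <= M1 a r.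
Proof.
  set (G t := Cmod (fval a (r * cos t, r * sin t))).
  assert (HPI := PI_RGT_0).
  assert (HG0 : 0 <= RInt G 0 (2 * PI)).
  { apply RInt_ge_0; [lra|apply ex_RInt_Cmod_fval|intros; apply Cmod_ge_0]. }
  assert (Hmean : 2 * PI * (r ^ n * Cmod (a n) ^ 2) <= Cmod (a n) * RInt G 0 (2 * PI)).
  { rewrite <- (is_RInt_unique _ _ _ _ is_RInt_Re_twisted_fval).
    rewrite <- (RInt_scal (V:=R_CompleteNormedModule) G) by apply ex_RInt_Cmod_fval.
    apply RInt_le; [lra|eexists; apply is_RInt_Re_twisted_fval| |].
    - apply (ex_RInt_scal (V:=R_NormedModule)), ex_RInt_Cmod_fval.
    - intros t _. eapply Rle_trans; [apply Rle_abs|]. eapply Rle_trans; [apply re_le_Cmod|].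
      rewrite !Cmod_mult, Cmod_conj, Cmod_cis, Rmult_1_r. apply Rle_refl. }
  unfold M1. fold G. apply Rmult_le_reg_l with (2 * PI); [lra|].
  rewrite <- (Rmult_assoc (2 * PI) (/ (2 * PI))), Rinv_r, Rmult_1_l by lra.
  destruct (Req_dec (Cmod (a n)) 0) as [Hz|Hnz].
  - rewrite Hz. lra.
  - assert (Hpos : 0 < Cmod (a n)) by (pose proof (Cmod_ge_0 (a n)); lra).
    apply Rmult_le_reg_l with (Cmod (a n)); [exact Hpos|]. nra.
Qed.

End CircleMeans.

Lemma le_of_forall_pow_le (c M : R) (n : nat) :
  (forall r, 0 <= r < 1 -> c * r ^ n <= M) -> c <= M.
Proof.
  intros H. set (u k := 1 - (1 / 2) ^ S k).
  assert (Hu : is_lim_seq u 1).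
  { replace (Finite 1) with (Finite (1 - 0)) by (f_equal; ring).
    apply is_lim_seq_minus'; [apply is_lim_seq_const|].
    apply (is_lim_seq_incr_1 (fun k => (1 / 2) ^ k)), is_lim_seq_geom. rewrite Rabs_pos_eq; lra. }
  assert (Hcont : continuity_pt (fun x => c * x ^ n) 1).
  { apply continuity_pt_filterlim.
    apply (ex_derive_continuous (K:=R_AbsRing) (V:=R_NormedModule) (fun x => c * x ^ n)).
    auto_derive. easy. }
  assert (Hu01 : forall k, 0 <= u k < 1).
  { intros k. pose proof (pow_lt (1 / 2) (S k) ltac:(lra)).
    pose proof (pow_lt_1_compat (1 / 2) (S k) ltac:(lra) ltac:(lia)). unfold u. lra. }
  pose proof (is_lim_seq_le _ _ _ _ (fun k => H (u k) (Hu01 k))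
    (is_lim_seq_continuous (fun x => c * x ^ n) u 1 Hcont Hu) (is_lim_seq_const M)) as Hle.
  simpl in Hle. rewrite pow1, Rmult_1_r in Hle. exact Hle.
Qed.

Lemma Cmod_coef_le_H1 (a : seqC) (M : R) (n : nat) :
  analytic_on_U a -> H1_norm_le a M -> Cmod (a n) <= M.
Proof.
  intros Ha HM. apply (le_of_forall_pow_le _ _ n). intros r Hr.
  eapply Rle_trans; [apply Cmod_coef_pow_le_M1|apply HM]; assumption.
Qed.

Lemma Cmod_coef_le_norm (X : seqC -> Prop) (NX : seqC -> R) :
  Banach_space_of_analytic_functions X NX -> embeds_in_H1 X NX ->
  exists C, 0 <= C /\ forall f n, X f -> Cmod (f n) <= C * NX f.
Proof.
  intros [[_ [[HNX _] _]] Han] [C0 Hemb]. exists (Rmax C0 0). split; [apply Rmax_r|].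
  intros f n Hf. eapply Rle_trans; [apply (Cmod_coef_le_H1 f _ n (Han f Hf) (Hemb f Hf))|].
  apply Rmult_le_compat_r; [apply HNX, Hf|apply Rmax_l].
Qed.

(** * Diagonal extraction *)

Definition strictly_increasing (phi : nat -> nat) : Prop := forall i, (phi i < phi (S i))%nat.

Lemma strictly_increasing_lt (phi : nat -> nat) (i j : nat) :
  strictly_increasing phi -> (i < j)%nat -> (phi i < phi j)%nat.
Proof. intros Hphi Hij. induction Hij as [|j _ IH]; [apply Hphi|]. specialize (Hphi j). lia. Qed.

Lemma strictly_increasing_ge (phi : nat -> nat) (i : nat) :
  strictly_increasing phi -> (i <= phi i)%nat.
Proof. intros Hphi. induction i as [|i IH]; [lia|]. specialize (Hphi i). lia. Qed.

Lemma strictly_increasing_comp (phi psi : nat -> nat) :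
  strictly_increasing phi -> strictly_increasing psi -> strictly_increasing (fun i => phi (psi i)).
Proof. intros Hphi Hpsi i. apply strictly_increasing_lt; [exact Hphi|apply Hpsi]. Qed.

Lemma is_lim_seq_strictly_increasing_subseq (y : nat -> R) (phi : nat -> nat) (l : Rbar) :
  strictly_increasing phi -> is_lim_seq y l -> is_lim_seq (fun i => y (phi i)) l.
Proof. intros Hphi. apply is_lim_seq_subseq, eventually_subseq, Hphi. Qed.

(* A weak form of subsequence, not requiring the reindexing [k |-> i] to be a function. *)
Lemma is_lim_seq_of_eventual_subseq (y z : nat -> R) (l : Rbar) (N : nat) :
  (forall k, (N <= k)%nat -> exists i, (k <= i)%nat /\ z k = y i) ->
  is_lim_seq y l -> is_lim_seq z l.
Proof.
  intros Hzy Hy P HP. destruct (Hy P HP) as [N0 HN0].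
  exists (max N N0). intros k Hk. destruct (Hzy k ltac:(lia)) as [i [Hki ->]].
  apply HN0. lia.
Qed.

Lemma cluster_point_subseq (x : nat -> R) (l : R) :
  (forall N eps, 0 < eps -> exists k, (N <= k)%nat /\ Rabs (x k - l) < eps) ->
  exists phi, strictly_increasing phi /\ is_lim_seq (fun i => x (phi i)) l.
Proof.
  intros Hcl.
  assert (Hsel : forall N i, { k | (N <= k)%nat /\ Rabs (x k - l) < (1 / 2) ^ i }).
  { intros N i. apply constructive_indefinite_description, Hcl, pow_lt. lra. }
  set (phi := fix phi i := match i with
                           | O => proj1_sig (Hsel O O)
                           | S i => proj1_sig (Hsel (S (phi i)) (S i)) end).
  assert (Hphi : forall i, Rabs (x (phi i) - l) < (1 / 2) ^ i).
  { intros [|i]; apply (proj2 (proj2_sig (Hsel _ _))). }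
  exists phi. split.
  - intros i. change (phi i < proj1_sig (Hsel (S (phi i)) (S i)))%nat.
    pose proof (proj1 (proj2_sig (Hsel (S (phi i)) (S i)))). lia.
  - apply (is_lim_seq_le_le (fun i => l - (1 / 2) ^ i) _ (fun i => l + (1 / 2) ^ i)).
    + intros i. specialize (Hphi i). apply Rabs_def2 in Hphi. lra.
    + replace (Finite l) with (Finite (l - 0)) by (f_equal; ring).
      apply is_lim_seq_minus'; [apply is_lim_seq_const|apply is_lim_seq_geom].
      rewrite Rabs_pos_eq; lra.
    + replace (Finite l) with (Finite (l + 0)) by (f_equal; ring).
      apply is_lim_seq_plus'; [apply is_lim_seq_const|apply is_lim_seq_geom].
      rewrite Rabs_pos_eq; lra.
Qed.

Lemma bounded_subseq_cv (x : nat -> R) (M : R) :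
  (forall k, Rabs (x k) <= M) ->
  exists phi, strictly_increasing phi /\ ex_finite_lim_seq (fun i => x (phi i)).
Proof.
  intros Hx.
  destruct (Bolzano_Weierstrass x (fun c => - M <= c <= M) (compact_P3 _ _)) as [l Hl].
  { intros k. now apply Rabs_le_between. }
  destruct (cluster_point_subseq x l) as [phi [Hphi Hlim]].
  - intros N eps Heps. apply (Hl (disc l (mkposreal eps Heps)) N).
    exists (mkposreal eps Heps). now intros y.
  - exists phi. split; [exact Hphi|]. now exists l.
Qed.

Section Diagonal.

Variables (x : nat -> nat -> R) (M : R).
Hypothesis HM : forall k j, Rabs (x k j) <= M.

Definition refine_at (psi : nat -> nat) (j : nat) : nat -> nat :=
  proj1_sig (constructive_indefinite_description _
    (bounded_subseq_cv (fun i => x (psi i) j) M (fun i => HM _ _))).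

Lemma refine_at_spec psi j :
  strictly_increasing (refine_at psi j) /\
  ex_finite_lim_seq (fun i => x (psi (refine_at psi j i)) j).
Proof. unfold refine_at. apply proj2_sig. Qed.

(* [nest j] extracts a subsequence along which the first [j] coordinates converge. *)
Fixpoint nest (j : nat) : nat -> nat :=
  match j with
  | O => fun i => i
  | S j => fun i => nest j (refine_at (nest j) j i)
  end.

Lemma nest_incr j : strictly_increasing (nest j).
Proof.
  induction j as [|j IH]; [intros i; simpl; lia|].
  apply (strictly_increasing_comp _ _ IH), refine_at_spec.
Qed.

Lemma nest_factor j d m : exists i, (m <= i)%nat /\ nest (j + d) m = nest j i.
Proof.
  revert m. induction d as [|d IH]; intros m.
  - exists m. rewrite Nat.add_0_r. split; [lia|easy].
  - rewrite Nat.add_succ_r. simpl.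
    destruct (IH (refine_at (nest (j + d)) (j + d) m)) as [i [Hi ->]].
    exists i. split; [|easy].
    eapply Nat.le_trans; [apply strictly_increasing_ge, refine_at_spec|exact Hi].
Qed.

Definition diagonal (k : nat) : nat := nest (S k) k.

Lemma diagonal_incr : strictly_increasing diagonal.
Proof.
  intros k. unfold diagonal. change (nest (S (S k)) (S k)) with
    (nest (S k) (refine_at (nest (S k)) (S k) (S k))).
  apply strictly_increasing_lt; [apply nest_incr|].
  pose proof (strictly_increasing_ge _ (S k) (proj1 (refine_at_spec (nest (S k)) (S k)))). lia.
Qed.

Lemma diagonal_cv j : ex_finite_lim_seq (fun k => x (diagonal k) j).
Proof.
  destruct (proj2 (refine_at_spec (nest j) j)) as [l Hl].
  exists l. apply (is_lim_seq_of_eventual_subseq (fun i => x (nest (S j) i) j) _ _ j); [|exact Hl].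
  intros k Hk. destruct (nest_factor (S j) (k - j) k) as [i [Hki Hi]].
  exists i. split; [exact Hki|]. unfold diagonal.
  replace (S k) with (S j + (k - j))%nat by lia. now rewrite Hi.
Qed.

End Diagonal.

Lemma bounded_double_seq_diagonal (x : nat -> nat -> R) (M : R) :
  (forall k j, Rabs (x k j) <= M) ->
  exists phi, strictly_increasing phi /\ forall j, ex_finite_lim_seq (fun k => x (phi k) j).
Proof.
  intros HM. exists (diagonal x M HM). split; [apply diagonal_incr|apply diagonal_cv].
Qed.

Lemma bounded_seqC_diagonal (u : nat -> seqC) (M : R) :
  (forall k n, Cmod (u k n) <= M) ->
  exists (phi : nat -> nat) (g : seqC), strictly_increasing phi /\
    (forall n, Cmod (g n) <= 2 * M) /\
    (forall n, is_lim_seq (fun k => Cmod (u (phi k) n - g n)) 0).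
Proof.
  intros HM.
  assert (HRe : forall k n, Rabs (Re (u k n)) <= M)
    by (intros; eapply Rle_trans; [apply re_le_Cmod|apply HM]).
  assert (HIm : forall k n, Rabs (Im (u k n)) <= M)
    by (intros; eapply Rle_trans; [apply im_le_Cmod|apply HM]).
  destruct (bounded_double_seq_diagonal (fun k n => Re (u k n)) M HRe) as [phi1 [Hphi1 Hcv1]].
  destruct (bounded_double_seq_diagonal (fun k n => Im (u (phi1 k) n)) M (fun k => HIm _))
    as [phi2 [Hphi2 Hcv2]].
  set (phi k := phi1 (phi2 k)).
  set (g n := (real (Lim_seq (fun k => Re (u (phi k) n))),
               real (Lim_seq (fun k => Im (u (phi k) n))))).
  assert (Hlim : forall n, is_lim_seq (fun k => Re (u (phi k) n)) (Re (g n))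
                        /\ is_lim_seq (fun k => Im (u (phi k) n)) (Im (g n))).
  { intros n. split; apply Lim_seq_correct'; [|apply Hcv2].
    destruct (Hcv1 n) as [l Hl]. exists l.
    exact (is_lim_seq_strictly_increasing_subseq (fun k => Re (u (phi1 k) n)) phi2 l Hphi2 Hl). }
  assert (Hbound : forall (y : nat -> R) (l : R),
             (forall k, Rabs (y k) <= M) -> is_lim_seq y l -> Rabs l <= M).
  { intros y l Hy Hl.
    exact (is_lim_seq_le _ _ _ _ Hy (is_lim_seq_abs _ _ Hl) (is_lim_seq_const M)). }
  exists phi, g. split; [exact (strictly_increasing_comp _ _ Hphi1 Hphi2)|]. split.
  - intros n. eapply Rle_trans; [apply Cmod_le_Re_Im|].
    pose proof (Hbound _ _ (fun k => HRe (phi k) n) (proj1 (Hlim n))).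
    pose proof (Hbound _ _ (fun k => HIm (phi k) n) (proj2 (Hlim n))). lra.
  - intros n. destruct (Hlim n) as [H1 H2].
    assert (Hnull : forall (y : nat -> R) (l : R),
               is_lim_seq y l -> is_lim_seq (fun k => Rabs (y k - l)) 0).
    { intros y l Hy. apply (proj1 (is_lim_seq_abs_0 (fun k => y k - l))).
      replace (Finite 0) with (Finite (l - l)) by (f_equal; ring).
      apply is_lim_seq_minus'; [exact Hy|apply is_lim_seq_const]. }
    apply (is_lim_seq_le_le (fun _ => 0) _
      (fun k => Rabs (Re (u (phi k) n) - Re (g n)) + Rabs (Im (u (phi k) n) - Im (g n)))).
    + intros k. split; [apply Cmod_ge_0|apply Cmod_le_Re_Im].
    + apply is_lim_seq_const.
    + replace (Finite 0) with (Finite (0 + 0)) by (f_equal; ring).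
      apply is_lim_seq_plus'; apply Hnull; assumption.
Qed.

(** * Banach sequence lattices *)

Lemma sum_f_R0_ge_term (x : nat -> R) (j m : nat) :
  (forall i, 0 <= x i) -> (j <= m)%nat -> x j <= sum_f_R0 x m.
Proof.
  intros Hx Hjm. induction Hjm as [|m _ IH]; simpl.
  - destruct j; simpl; [lra|]. pose proof (cond_pos_sum x j Hx). lra.
  - specialize (Hx (S m)). lra.
Qed.

Lemma is_lim_seq_sum_f_R0_0 (x : nat -> nat -> R) (m : nat) :
  (forall j, is_lim_seq (fun k => x k j) 0) -> is_lim_seq (fun k => sum_f_R0 (x k) m) 0.
Proof.
  intros Hx. induction m as [|m IH]; simpl; [apply Hx|].
  replace (Finite 0) with (Finite (0 + 0)) by (f_equal; ring).
  apply is_lim_seq_plus'; [exact IH|apply Hx].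
Qed.

Definition sabs (x : seqC) : seqC := fun n => RtoC (Cmod (x n)).

Definition tail_abs (lam : seqC) (m : nat) : seqC :=
  fun n => if (m <? n)%nat then RtoC (Cmod (lam n)) else RtoC 0.

Section Lattice.

Variables (E : seqC -> Prop) (NE : seqC -> R).
Hypothesis HE : Banach_sequence_lattice E NE.

Lemma lattice_norm_nonneg x : E x -> 0 <= NE x.
Proof. destruct HE as [[_ [[Hpos _] _]] _]. apply Hpos. Qed.

Lemma lattice_abs x : E x -> E (sabs x) /\ NE (sabs x) <= NE x.
Proof.
  intros Hx. apply (proj2 HE x (sabs x) Hx). intros n. unfold sabs.
  rewrite Cmod_R, Rabs_pos_eq by apply Cmod_ge_0. apply Rle_refl.
Qed.

Lemma lattice_dom2 (c1 c2 : R) x1 x2 y :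
  0 <= c1 -> 0 <= c2 -> E x1 -> E x2 ->
  (forall n, Cmod (y n) <= c1 * Cmod (x1 n) + c2 * Cmod (x2 n)) ->
  E y /\ NE y <= c1 * NE x1 + c2 * NE x2.
Proof.
  intros Hc1 Hc2 Hx1 Hx2 Hy.
  destruct HE as [[[_ [Hadd Hscal]] [[_ [_ [Hnscal Hntri]]] _]] Hdom].
  destruct (lattice_abs x1 Hx1) as [Ha1 HNa1], (lattice_abs x2 Hx2) as [Ha2 HNa2].
  set (z := sadd (sscal (RtoC c1) (sabs x1)) (sscal (RtoC c2) (sabs x2))).
  assert (Hz : E z) by (apply Hadd; apply Hscal; assumption).
  destruct (Hdom z y Hz) as [Hy' HNy].
  { intros n. unfold z, sadd, sscal, sabs. rewrite <- RtoC_mult, <- RtoC_mult, <- RtoC_plus, Cmod_R.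
    rewrite Rabs_pos_eq; [apply Hy|].
    pose proof (Cmod_ge_0 (x1 n)). pose proof (Cmod_ge_0 (x2 n)). nra. }
  split; [exact Hy'|]. eapply Rle_trans; [exact HNy|].
  eapply Rle_trans; [apply Hntri; apply Hscal; assumption|].
  rewrite !Hnscal, !Cmod_R, !Rabs_pos_eq by assumption. nra.
Qed.

Lemma lattice_dom (c : R) x y :
  0 <= c -> E x -> (forall n, Cmod (y n) <= c * Cmod (x n)) -> E y /\ NE y <= c * NE x.
Proof.
  intros Hc Hx Hy. destruct (lattice_dom2 c 0 x x y Hc (Rle_refl 0) Hx Hx) as [Hy' HNy].
  - intros n. rewrite Rmult_0_l, Rplus_0_r. apply Hy.
  - split; [exact Hy'|]. lra.
Qed.

Lemma tail_abs_in lam m : E lam -> E (tail_abs lam m).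
Proof.
  intros Hlam. apply (lattice_dom 1 lam); [lra|exact Hlam|]. intros n. unfold tail_abs.
  destruct (m <? n)%nat; rewrite Cmod_R; [rewrite Rabs_pos_eq by apply Cmod_ge_0|rewrite Rabs_R0];
    pose proof (Cmod_ge_0 (lam n)); lra.
Qed.

Lemma tail_abs_null lam :
  order_continuous E NE -> E lam -> is_lim_seq (fun m => NE (tail_abs lam m)) 0.
Proof.
  intros Hoc Hlam. apply Hoc.
  - intros m. now apply tail_abs_in.
  - intros m n. unfold tail_abs. destruct (m <? n)%nat; simpl; split; try lra. apply Cmod_ge_0.
  - intros m n. unfold tail_abs. pose proof (Cmod_ge_0 (lam n)).
    destruct (Nat.ltb_spec (S m) n), (Nat.ltb_spec m n); simpl; lra || lia.
  - intros n. apply (is_lim_seq_incr_n _ n). eapply is_lim_seq_ext; [|apply is_lim_seq_const].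
    intros m. unfold tail_abs. destruct (Nat.ltb_spec (m + n) n); [lia|easy].
Qed.
Lemma lattice_mult_null (lam : seqC) (w : nat -> seqC) (B : R) :
  order_continuous E NE -> E lam ->
  (forall k n, Cmod (w k n) <= B) -> (forall n, is_lim_seq (fun k => Cmod (w k n)) 0) ->
  is_lim_seq (fun k => NE (mult_op lam (w k))) 0.
Proof.
  intros Hoc Hlam HB Hw.
  assert (HB0 : 0 <= B) by (eapply Rle_trans; [apply Cmod_ge_0|apply (HB 0%nat 0%nat)]).
  assert (Hlam0 := lattice_norm_nonneg lam Hlam).
  apply is_lim_seq_spec. intros eps.
  destruct (proj2 (is_lim_seq_spec _ _) (tail_abs_null lam Hoc Hlam)
    (mkposreal (eps / (2 * (B + 1))) ltac:(apply Rdiv_lt_0_compat; [apply cond_pos|lra])))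
    as [m Hm].
  specialize (Hm m (le_n m)). simpl in Hm.
  rewrite Rminus_0_r, Rabs_pos_eq in Hm by apply lattice_norm_nonneg, tail_abs_in, Hlam.
  set (head k := sum_f_R0 (fun j => Cmod (w k j)) m).
  destruct (proj2 (is_lim_seq_spec _ _) (is_lim_seq_sum_f_R0_0 (fun k j => Cmod (w k j)) m Hw)
    (mkposreal (eps / (2 * (NE lam + 1))) ltac:(apply Rdiv_lt_0_compat; [apply cond_pos|lra])))
    as [K HK].
  exists K. intros k Hk. specialize (HK k Hk). simpl in HK. fold (head k) in HK.
  assert (Hhead0 : 0 <= head k) by (apply cond_pos_sum; intros; apply Cmod_ge_0).
  rewrite Rminus_0_r, Rabs_pos_eq in HK by exact Hhead0.
  destruct (lattice_dom2 (head k) B lam (tail_abs lam m) (mult_op lam (w k)) Hhead0 HB0 Hlam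
    (tail_abs_in lam m Hlam)) as [Hy HNy].
  { intros n. unfold mult_op, tail_abs. rewrite Cmod_mult.
    pose proof (Cmod_ge_0 (lam n)). pose proof (Cmod_ge_0 (w k n)).
    destruct (Nat.ltb_spec m n) as [Hmn|Hnm]; rewrite Cmod_R.
    - rewrite Rabs_pos_eq by lra. specialize (HB k n). nra.
    - rewrite Rabs_R0.
      pose proof (sum_f_R0_ge_term (fun j => Cmod (w k j)) n m (fun j => Cmod_ge_0 _) Hnm).
      fold (head k) in H1. nra. }
  rewrite Rminus_0_r, Rabs_pos_eq by apply lattice_norm_nonneg, Hy.
  eapply Rle_lt_trans; [exact HNy|].
  assert (head k * NE lam <= eps / 2).
  { apply Rle_trans with (eps / (2 * (NE lam + 1)) * (NE lam + 1)); [apply Rmult_le_compat; lra|].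
    apply Req_le. field. lra. }
  assert (B * NE (tail_abs lam m) < eps / 2).
  { apply Rle_lt_trans with ((B + 1) * NE (tail_abs lam m)).
    - pose proof (lattice_norm_nonneg _ (tail_abs_in lam m Hlam)). nra.
    - apply Rlt_le_trans with ((B + 1) * (eps / (2 * (B + 1)))); [apply Rmult_lt_compat_l; lra|].
      apply Req_le. field. lra. }
  lra.
Qed.

Lemma mult_op_bound (lam f : seqC) (c : R) :
  E lam -> 0 <= c -> (forall n, Cmod (f n) <= c) ->
  E (mult_op lam f) /\ NE (mult_op lam f) <= c * NE lam.
Proof.
  intros Hlam Hc Hf. apply (lattice_dom c lam); [exact Hc|exact Hlam|].
  intros n. unfold mult_op. rewrite Cmod_mult, Rmult_comm.
  apply Rmult_le_compat_r; [apply Cmod_ge_0|apply Hf].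
Qed.

Lemma mult_op_bounded_subseq_cv (lam : seqC) (u : nat -> seqC) (M : R) :
  order_continuous E NE -> E lam -> (forall k n, Cmod (u k n) <= M) ->
  exists (phi : nat -> nat) (h : seqC), strictly_increasing phi /\ E h /\
    is_lim_seq (fun k => NE (ssub (mult_op lam (u (phi k))) h)) 0.
Proof.
  intros Hoc Hlam HM.
  assert (HM0 : 0 <= M) by (eapply Rle_trans; [apply Cmod_ge_0|apply (HM 0%nat 0%nat)]).
  destruct (bounded_seqC_diagonal u M HM) as [phi [g [Hphi [Hg Hcv]]]].
  set (w k := ssub (u (phi k)) g).
  assert (Hw : forall k n, Cmod (w k n) <= 3 * M).
  { intros k n. eapply Rle_trans; [apply Cmod_sub_le|].
    pose proof (HM (phi k) n). pose proof (Hg n). lra. }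
  exists phi, (mult_op lam g). split; [exact Hphi|].
  split; [apply (mult_op_bound lam g (2 * M)); auto; lra|].
  apply (is_lim_seq_le_le (fun _ => 0) _ (fun k => NE (mult_op lam (w k)))).
  - intros k.
    destruct (mult_op_bound lam (w k) (3 * M) Hlam ltac:(lra) (Hw k)) as [Hlamw _].
    destruct (lattice_dom 1 (mult_op lam (w k))
      (ssub (mult_op lam (u (phi k))) (mult_op lam g)) ltac:(lra) Hlamw) as [Hin Hle].
    { intros n. unfold w, ssub, mult_op. rewrite Rmult_1_l. apply Req_le. f_equal. ring. }
    split; [now apply lattice_norm_nonneg|lra].
  - apply is_lim_seq_const.
  - exact (lattice_mult_null lam w _ Hoc Hlam Hw Hcv).
Qed.

End Lattice.

Theorem proposition2p1
  (X : seqC -> Prop) (NX : seqC -> R) (E : seqC -> Prop) (NE : seqC -> R)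
  (lam : seqC) :
  Banach_space_of_analytic_functions X NX ->
  embeds_in_H1 X NX ->
  Banach_sequence_lattice E NE ->
  order_continuous E NE ->
  E lam ->
  (forall f, X f -> E (mult_op lam f)) /\
  (exists C0 : R, forall f, X f -> NE (mult_op lam f) <= C0 * NX f) /\
  compact_op X NX E NE (mult_op lam).
Proof.
  intros HX Hemb HE Hoc Hlam.
  destruct (Cmod_coef_le_norm X NX HX Hemb) as [C [HC Hcoef]].
  assert (HNX : forall f, X f -> 0 <= NX f) by apply HX.
  assert (Hmult : forall f, X f -> E (mult_op lam f) /\ NE (mult_op lam f) <= C * NX f * NE lam).
  { intros f Hf. apply (mult_op_bound E NE HE); [exact Hlam| |intros n; now apply Hcoef].
    pose proof (HNX f Hf). nra. }
  split; [|split].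
  - intros f Hf. apply Hmult, Hf.
  - exists (C * NE lam). intros f Hf. destruct (Hmult f Hf) as [_ H]. lra.
  - intros u Hu [B HB]. apply (mult_op_bounded_subseq_cv E NE HE lam u (C * B) Hoc Hlam).
    intros k n. eapply Rle_trans; [apply Hcoef, Hu|]. now apply Rmult_le_compat_l.
Qed.
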